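(* Let $Y$ be a random simplicial complex on $[n]=\{0,\dots,n\}$ drawn from the lower model in the medial regime, with constants $0<p\le P<1$ such that $p\le p_\sigma\le P$ for all $\sigma$. Then $Y$ is connected with probability at least $1-C\exp\!\big(-\tfrac{n^{1/2}}{2}\big)$, where $C>0$ is a constant depending on $p$ and independent of $n$.
   Context: Lower model: each non-empty proper subset $\sigma\subsetneq[n]$ is included independently with probability $p_\sigma$ into a random hypergraph $X$, and $Y$ is the largest simplicial complex contained in $X$ ($\sigma\in Y$ iff every non-empty $\tau\subseteq\sigma$ lies in $X$). Medial regime: $p,P\in(0,1)$ are independent of $n$. *)

From HB Require Import structures.
From mathcomp Require Import all_boot all_order all_algebra.
From mathcomp Require Import reals.
From mathcomp.analysis Require Import sequences exp.
Set Implicit Arguments. Unset Strict Implicit. Unset Printing Implicit Defensive.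
Import Order.TTheory GRing.Theory Num.Theory.
Local Open Scope ring_scope.

(* Vertex set [n] = {0,...,n} is 'I_n.+1. *)

Definition face (n : nat) (s : {set 'I_n.+1}) : bool :=
  (s != set0) && (s != setT).

Definition faces (n : nat) : {set {set 'I_n.+1}} := [set s | face s].

(* Probability weight of a hypergraph X (X \subset faces n) in the lower
   model: each face s is included independently with probability ps s. *)
Definition lower_weight (R : realType) (n : nat) (ps : {set 'I_n.+1} -> R)
  (X : {set {set 'I_n.+1}}) : R :=
  \prod_(s : {set 'I_n.+1} | face s) (if s \in X then ps s else 1 - ps s).

Definition lower_prob (R : realType) (n : nat) (ps : {set 'I_n.+1} -> R)
  (E : pred {set {set 'I_n.+1}}) : R :=
  \sum_(X : {set {set 'I_n.+1}} | (X \subset faces n) && E X) lower_weight ps X.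

(* Largest simplicial complex contained in X: the non-empty s all of whose
   non-empty subsets lie in X. *)
Definition lower_complex (n : nat) (X : {set {set 'I_n.+1}}) : {set {set 'I_n.+1}} :=
  [set s | (s != set0) &&
     [forall t : {set 'I_n.+1}, ((t != set0) && (t \subset s)) ==> (t \in X)]].

Definition complex_connected (n : nat) (Y : {set {set 'I_n.+1}}) : bool :=
  [exists i : 'I_n.+1, [set i] \in Y] &&
  [forall i : 'I_n.+1, forall j : 'I_n.+1,
     (([set i] \in Y) && ([set j] \in Y)) ==>
       connect (fun a b : 'I_n.+1 => [set a; b] \in Y) i j].

(* Y is connected as soon as it has a vertex and any two vertices i, j have a
   common neighbour k, i.e. the faces {k}, {i,k}, {j,k} of the path i-k-j all
   lie in X.  For fixed i, j these triples are disjoint for distinct k, so by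
   independence all n - 1 detours are missing with probability at most
   (1 - p^3)^(n-1).  A union bound over the (n+1)^2 pairs and the event "no
   vertex" bounds the failure probability by
   (1 - p)^(n+1) + (n+1)^2 q^(n-1) with q = 1 - p^3, and completing the square
   in the exponent gives (n+1)^2 q^n <= exp (81 / (16 |ln q|) - sqrt n / 2). *)

From HB Require Import structures.
From mathcomp Require Import all_boot all_order all_algebra.
From mathcomp Require Import reals.
From mathcomp.analysis Require Import sequences exp.
From mathcomp Require Import ring lra.
Import Order.TTheory GRing.Theory Num.Theory.
Local Open Scope ring_scope.
Set Implicit Arguments. Unset Strict Implicit. Unset Printing Implicit Defensive.

Lemma finset_ind (T : finType) (P : {set T} -> Prop) :
  P set0 -> (forall (x : T) (A : {set T}), x \notin A -> P A -> P (x |: A)) -> forall A, P A.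
Proof.
move=> P0 PU A; elim: {A}#|A| {-2}A (eqxx #|A|) => [|m IH] A.
  by rewrite cards_eq0 => /eqP ->.
case: (set_0Vmem A) => [-> //|[x xA] cardA].
rewrite -(setD1K xA); apply: PU; first by rewrite !inE eqxx.
by apply: IH; rewrite (cardsD1 x) xA in cardA.
Qed.

Section ProductMeasure.
Variables (R : realType) (T : finType) (a : T -> R).
Implicit Types (s t : T) (A B X : {set T}) (E : pred {set T}).

Definition weight (X : {set T}) : R :=
  \prod_t (if t \in X then a t else 1 - a t).

Definition prob (E : pred {set T}) : R := \sum_(X | E X) weight X.

Definition ignores (A : {set T}) (E : pred {set T}) := forall X, E (X :\: A) = E X.

Lemma ignoresS A B E : A \subset B -> ignores B E -> ignores A E.
Proof. by move=> AB EB X; rewrite -EB -[RHS]EB setDDl (setUidPr AB). Qed.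

Lemma prob_predT : prob predT = 1.
Proof.
rewrite /prob -(@bigA_distr R 0 1 *%R +%R).
by apply: big1 => t _; rewrite /= addrC subrK.
Qed.

Lemma prob_split (B E : pred {set T}) :
  prob E = prob (fun X => B X && E X) + prob (fun X => ~~ B X && E X).
Proof. by rewrite /prob (bigID B) /=; congr (_ + _); apply: eq_bigl => X; rewrite andbC. Qed.

Lemma prob_complement E : prob E = 1 - prob (fun X => ~~ E X).
Proof. by rewrite -prob_predT /prob [in RHS](bigID E) /= addrK. Qed.

Definition toggle (s : T) (X : {set T}) := if s \in X then X :\ s else s |: X.

Lemma toggleK s : involutive (toggle s).
Proof.
move=> X; rewrite /toggle; case sX: (s \in X).
  by rewrite setD11 setD1K.
by rewrite setU11 setU1K ?sX.
Qed.

Lemma prob_mem s E : ignores [set s] E ->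
  prob (fun X => (s \in X) && E X) = a s * prob E.
Proof.
move=> Es.
(* Toggling s is an involution fixing E and the other coordinates; it matches
   the terms with s \in X against those with s \notin X. *)
pose w' X := \prod_(t | t != s) (if t \in X then a t else 1 - a t).
have weightE X : weight X = (if s \in X then a s else 1 - a s) * w' X.
  by rewrite /weight (bigD1 s).
have setD1_toggle X : X :\ s = toggle s X :\ s.
  by rewrite /toggle; case: (s \in X); rewrite ?setDDl ?setUid // setDUl setDv set0U.
have w'_toggle X : w' (toggle s X) = w' X.
  apply: eq_bigr => t ts; rewrite /toggle; case: (s \in X); rewrite !inE (negbTE ts) //.
have E_toggle X : E (toggle s X) = E X by rewrite -Es -setD1_toggle Es.
have mem_toggle X : (s \in toggle s X) = (s \notin X).
  by rewrite /toggle; case: (s \in X); rewrite !inE eqxx.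
set S := \sum_(X : {set T} | (s \in X) && E X) w' X.
have out : \sum_(X : {set T} | (s \notin X) && E X) w' X = S.
  rewrite (reindex_inj (inv_inj (toggleK s))) /=.
  by apply: eq_big => [X|X _]; rewrite ?mem_toggle ?negbK ?E_toggle ?w'_toggle.
have in_E : prob (fun X => (s \in X) && E X) = a s * S.
  by rewrite /prob mulr_sumr; apply: eq_bigr => X /andP[sX _]; rewrite weightE sX.
have out_E : prob (fun X => (s \notin X) && E X) = (1 - a s) * S.
  rewrite -out /prob mulr_sumr; apply: eq_bigr => X /andP[sX _].
  by rewrite weightE (negbTE sX).
by rewrite [prob E](prob_split (fun X => s \in X)) in_E out_E -mulrDl subrKC mul1r.
Qed.

Lemma eq_prob E E' : E =1 E' -> prob E = prob E'.
Proof. exact: eq_bigl. Qed.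

Lemma prob_subset A E : ignores A E ->
  prob (fun X => (A \subset X) && E X) = (\prod_(s in A) a s) * prob E.
Proof.
elim/finset_ind: A E => [|s A sA IH] E EA.
  by rewrite big_set0 mul1r; apply: eq_prob => X; rewrite sub0set.
have EsA : ignores [set s] (fun X => (A \subset X) && E X).
  by move=> X; rewrite /= subsetD1 sA andbT (ignoresS (subsetUl _ _) EA).
rewrite big_setU1 //= -mulrA -IH; last exact: ignoresS (subsetUr _ _) EA.
rewrite -prob_mem //; apply: eq_prob => X.
by rewrite /= subUset sub1set andbA.
Qed.

Lemma prob_forall_not_subset (I : finType) (K : {set I}) (g : I -> {set T}) :
  {in K &, forall i j, i != j -> [disjoint g i & g j]} ->
  prob (fun X => [forall i in K, ~~ (g i \subset X)]) =
    \prod_(i in K) (1 - \prod_(s in g i) a s).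
Proof.
elim/finset_ind: K => [|x K xK IH] gK.
  rewrite big_set0 -prob_predT; apply: eq_prob => X.
  by apply/forall_inP => i; rewrite inE.
set F := fun X => [forall i in K, ~~ (g i \subset X)].
have Fx : ignores (g x) F.
  move=> X; apply: eq_forallb_in => i iK; rewrite subsetD gK ?andbT //.
  - by rewrite in_setU1 iK orbT.
  - exact: setU11.
  - by apply: contraNneq xK => <-.
have split_x X :
    [forall i in x |: K, ~~ (g i \subset X)] = ~~ (g x \subset X) && F X.
  apply/forall_inP/andP => [H|[Hx /forall_inP HK] i].
    split; first exact/H/setU11.
    by apply/forall_inP => i iK; apply/H; rewrite in_setU1 iK orbT.
  by rewrite in_setU1 => /predU1P[->|/HK].
rewrite (eq_prob split_x) big_setU1 //= -IH; last first.
  by move=> i j iK jK; apply: gK; rewrite in_setU1 ?iK ?jK orbT.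
rewrite mulrBl mul1r -prob_subset // [prob F](prob_split (fun X => g x \subset X)).
by rewrite /F addrAC subrr add0r.
Qed.

Hypothesis a01 : forall t, 0 <= a t <= 1.

Lemma weight_ge0 X : 0 <= weight X.
Proof.
apply: prodr_ge0 => t _; have /andP[a0 a1] := a01 t.
by case: (t \in X); rewrite ?subr_ge0.
Qed.

Lemma le_prob E E' : (forall X, E X -> E' X) -> prob E <= prob E'.
Proof.
move=> EE'; rewrite /prob [leLHS]big_mkcond [leRHS]big_mkcond /=.
apply: ler_sum => X _; case EX: (E X); first by rewrite EE'.
by case: (E' X); rewrite ?weight_ge0.
Qed.

Lemma prob_le1 E : prob E <= 1.
Proof. by rewrite -prob_predT; apply: le_prob. Qed.

Lemma le_probU E E' : prob (fun X => E X || E' X) <= prob E + prob E'.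
Proof.
rewrite /prob [leLHS]big_mkcond [X in _ <= X + _]big_mkcond.
rewrite [X in _ <= _ + X]big_mkcond -big_split /=.
apply: ler_sum => X _.
have w0 := weight_ge0 X.
by case: (E X); case: (E' X); rewrite ?addr0 ?add0r ?lerDl.
Qed.

Lemma le_prob_exists (I : finType) (E : I -> pred {set T}) :
  prob (fun X => [exists i, E i X]) <= \sum_i prob (E i).
Proof.
have w0 X (b : bool) : 0 <= (if b then weight X else 0).
  by case: b; rewrite ?weight_ge0.
rewrite /prob big_mkcond /= (eq_bigr (fun i => \sum_X if E i X then weight X else 0)).
  rewrite exchange_big /=; apply: ler_sum => X _.
  case: existsP => [[i Ei]|_]; last exact: sumr_ge0.
  by rewrite (bigD1 i) //= Ei lerDl sumr_ge0.
by move=> i _; rewrite big_mkcond.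
Qed.

End ProductMeasure.

Lemma subset_set2 (T : finType) (i k : T) (t : {set T}) :
  t \subset [set i; k] -> t != set0 -> [|| t == [set i], t == [set k] | t == [set i; k]].
Proof.
move=> /setIidPl <-; rewrite setIUr.
have := subsetIr t [set k]; have := subsetIr t [set i]; rewrite !subset1.
by do 2!case/orP=> /eqP ->; rewrite ?set0U ?setU0 ?eqxx ?orbT.
Qed.

Section LowerComplex.
Variable n : nat.
Implicit Types (i j k x y : 'I_n.+1) (s : {set 'I_n.+1}) (X : {set {set 'I_n.+1}}).

Lemma face_of_mem_notin s x y : x \in s -> y \notin s -> face s.
Proof.
move=> xs ys; apply/andP; split; first by apply/set0Pn; exists x.
by apply: contraNneq ys => ->; rewrite inE.
Qed.

Lemma lower_complex_subset X : lower_complex X \subset X.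
Proof.
apply/subsetP => s; rewrite inE => /andP[s0 /forallP /(_ s)].
by rewrite s0 subxx.
Qed.

Lemma lower_complex_edge X i k :
  [set i] \in X -> [set k] \in X -> [set i; k] \in X -> [set i; k] \in lower_complex X.
Proof.
move=> Xi Xk Xik; rewrite inE; apply/andP; split.
  by apply/set0Pn; exists i; rewrite !inE eqxx.
apply/forallP => t; apply/implyP => /andP[t0 ts].
by case/or3P: (subset_set2 ts t0) => /eqP ->.
Qed.

Lemma lower_complex_vertex X i : ([set i] \in lower_complex X) = ([set i] \in X).
Proof.
apply/idP/idP; first exact/subsetP/lower_complex_subset.
by move=> Xi; rewrite -[[set i]]setUid lower_complex_edge ?setUid.
Qed.

Definition detour i j k : {set {set 'I_n.+1}} := [set [set k]; [set i; k]; [set j; k]].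

Lemma detour_connect X i j k : [set i] \in X -> [set j] \in X -> detour i j k \subset X ->
  connect (fun a b => [set a; b] \in lower_complex X) i j.
Proof.
move=> Xi Xj; rewrite !subUset !sub1set => /andP[/andP[Xk Xik] Xjk].
apply: (@connect_trans _ _ k); apply: connect1; first exact: lower_complex_edge.
by rewrite setUC lower_complex_edge.
Qed.

Lemma not_connected_cover X : ~~ complex_connected (lower_complex X) ->
  [forall i, [set i] \notin X] ||
  [exists i, exists j, (i != j) && [forall k in ~: [set i; j], ~~ (detour i j k \subset X)]].
Proof.
rewrite negb_and negb_exists negb_forall => /orP[/forallP noV | /existsP[i]].
  by apply/orP; left; apply/forallP => i; rewrite -lower_complex_vertex noV.
rewrite negb_forall => /existsP[j]; rewrite negb_imply !lower_complex_vertex.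
move=> /andP[/andP[Xi Xj] nc]; apply/orP; right; apply/existsP; exists i.
apply/existsP; exists j; rewrite (contraNneq _ nc) => [|->]; last exact: connect0.
by apply/forall_inP => k _; apply: contra nc; apply: detour_connect.
Qed.

End LowerComplex.

Section LowerModelBounds.
Variables (R : realType) (n : nat) (p : R) (ps : {set 'I_n.+1} -> R).
Implicit Types (i j k x y : 'I_n.+1) (s : {set 'I_n.+1}).
Hypothesis p_ge0 : 0 <= p.
Hypothesis p_le1 : p <= 1.
Hypothesis ps_bounds : forall s, face s -> p <= ps s <= 1.

(* Non-faces get probability 0, so that [lower_prob] becomes a product measure
   over all subsets of {set 'I_n.+1}. *)
Definition face_weight s := if face s then ps s else 0.

Lemma face_weight01 s : 0 <= face_weight s <= 1.
Proof.
rewrite /face_weight; case: ifP => [fs|_]; last by rewrite lexx ler01.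
by have /andP[/(le_trans p_ge0) -> ->] := ps_bounds fs.
Qed.

Lemma lower_probE E : lower_prob ps E = prob face_weight E.
Proof.
rewrite /lower_prob /prob [RHS](bigID (fun X : {set {set 'I_n.+1}} => X \subset faces n)) /=.
rewrite [X in _ = _ + X]big1 ?addr0 => [|X /andP[_ /subsetPn[t tX]]]; last first.
  by rewrite inE => ft; rewrite /weight (bigD1 t) //= tX /face_weight (negbTE ft) mul0r.
apply: eq_big => [X|X /andP[Xf _]]; first by rewrite andbC.
rewrite /lower_weight /weight [RHS](bigID (@face n)) /= [X in _ = _ * X]big1 ?mulr1.
  by apply: eq_bigr => t ft; rewrite /face_weight ft.
move=> t ft; rewrite /face_weight (negbTE ft) subr0.
by case: ifP => // /(subsetP Xf); rewrite inE (negbTE ft).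
Qed.

Lemma prob_no_vertex : (0 < n)%N ->
  prob face_weight (fun X => [forall i, [set i] \notin X]) <= (1 - p) ^+ n.+1.
Proof.
move=> n_gt0.
have face_set1 i : face [set i].
  by rewrite (@face_of_mem_notin _ _ i (lift i (Ordinal n_gt0))) ?set11 // inE eq_sym neq_lift.
rewrite (@eq_prob _ _ _ _ (fun X => [forall i in [set: 'I_n.+1], ~~ ([set [set i]] \subset X)])).
  rewrite prob_forall_not_subset => [|i j _ _ ij]; last first.
    by rewrite disjoints1 inE (inj_eq set1_inj).
  have -> : (1 - p) ^+ n.+1 = \prod_(i in [set: 'I_n.+1]) (1 - p).
    by rewrite prodr_const cardsT card_ord.
  apply: ler_prod => i _; rewrite big_set1 /face_weight face_set1.
  by have := ps_bounds (face_set1 i); case/andP=> ? ?; apply/andP; split; lra.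
by move=> X /=; apply: eq_forallb => i; rewrite in_setT sub1set.
Qed.

Lemma prob_no_detour i j : i != j ->
  prob face_weight (fun X => [forall k in ~: [set i; j], ~~ (detour i j k \subset X)])
    <= (1 - p ^+ 3) ^+ n.-1.
Proof.
move=> ij.
have in_detour k s : s \in detour i j k -> (k \in s) && (s \subset [set i; j; k]).
  rewrite /detour !inE => /orP[/orP[]|] /eqP ->;
    by rewrite ?subUset ?sub1set !inE ?eqxx ?orbT.
rewrite prob_forall_not_subset => [|k k']; last first.
  rewrite !inE !negb_or => /andP[ki kj] _ kk'; rewrite disjoint_subset.
  apply/subsetP => s /in_detour/andP[ks _]; rewrite inE; apply/negP.
  by move=> /in_detour/andP[_ /subsetP/(_ k ks)]; rewrite !inE (negbTE ki) (negbTE kj) (negbTE kk').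
have -> : (1 - p ^+ 3) ^+ n.-1 = \prod_(k in ~: [set i; j]) (1 - p ^+ 3).
  rewrite prodr_const; congr (_ ^+ _).
  by have := cardsC [set i; j]; rewrite cards2 ij card_ord add2n => -[/(congr1 predn) /= ->].
apply: ler_prod => k; rewrite !inE negb_or => /andP[ki kj].
have face_detour s : s \in detour i j k -> face s.
  rewrite /detour !inE => /orP[/orP[]|] /eqP ->.
  - by apply: (@face_of_mem_notin _ _ k i); rewrite !inE ?eqxx // eq_sym.
  - by apply: (@face_of_mem_notin _ _ k j); rewrite !inE ?eqxx ?orbT // negb_or eq_sym ij eq_sym.
  - by apply: (@face_of_mem_notin _ _ k i); rewrite !inE ?eqxx ?orbT // negb_or ij eq_sym.
have card_detour : (#|detour i j k| <= 3)%N.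
  rewrite /detour; apply: leq_trans (leq_card_setU _ _) _.
  by rewrite cards1 cards2 addn1; case: (_ != _).
have p3_le : p ^+ 3 <= \prod_(s in detour i j k) face_weight s.
  apply: le_trans (ler_wiXn2l p_ge0 p_le1 card_detour) _.
  rewrite -prodr_const; apply: ler_prod => s /face_detour fs.
  by rewrite p_ge0 /face_weight fs; case/andP: (ps_bounds fs).
rewrite lerD2l lerN2 p3_le andbT subr_ge0 prodr_ile1 // => s _.
exact: face_weight01.
Qed.

Lemma prob_disconnected_le : (0 < n)%N ->
  lower_prob ps (fun X => ~~ complex_connected (lower_complex X)) <=
    (1 - p) ^+ n.+1 + n.+1%:R ^+ 2 * (1 - p ^+ 3) ^+ n.-1.
Proof.
move=> n_gt0; rewrite lower_probE.
apply: le_trans (le_prob face_weight01 (@not_connected_cover n)) _.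
apply: le_trans (le_probU face_weight01 _ _) _.
apply: lerD; first exact: prob_no_vertex.
apply: le_trans (le_prob_exists face_weight01 _) _.
have -> : n.+1%:R ^+ 2 * (1 - p ^+ 3) ^+ n.-1 =
    \sum_(i : 'I_n.+1) \sum_(j : 'I_n.+1) (1 - p ^+ 3) ^+ n.-1.
  by rewrite !sumr_const card_ord -mulrnA -[RHS]mulr_natl expr2 -natrM.
apply: ler_sum => i _; apply: le_trans (le_prob_exists face_weight01 _) _.
apply: ler_sum => j _; have [<-|ij] := eqVneq i j.
  by rewrite /prob big_pred0 // exprn_ge0 // subr_ge0 exprn_ile1.
by apply: le_trans _ (prob_no_detour ij); apply: (le_prob face_weight01) => X /andP[].
Qed.

End LowerModelBounds.

Lemma sqr_mul_geometric_le (R : realType) (q : R) (N : nat) : 0 < q < 1 ->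
  N.+1%:R ^+ 2 * q ^+ N <= expR (81 / (16 * - ln q)) * expR (- (Num.sqrt N%:R / 2)).
Proof.
move=> /andP[q0 q1]; set c := - ln q; set s := Num.sqrt N%:R.
have c_gt0 : 0 < c by rewrite oppr_gt0 ln_lt0 // q0.
have s_ge0 : 0 <= s by apply: sqrtr_ge0.
have s2 : s ^+ 2 = N%:R by rewrite sqr_sqrtr // ler0n.
have N1_le : N.+1%:R <= expR (2 * s).
  apply: (@le_trans _ _ ((1 + s) ^+ 2)); first by rewrite -natr1 -s2; nra.
  rewrite expRM_natl lerXn2r ?nnegrE ?expR_ge0 ?expR_ge1Dx //.
  exact: addr_ge0.
have qN : q ^+ N = expR (- (c * s ^+ 2)).
  by rewrite s2 -mulNr mulrC expRM_natl /c opprK lnK // posrE.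
apply: (@le_trans _ _ (expR (4 * s) * expR (- (c * s ^+ 2)))).
  rewrite qN ler_wpM2r ?expR_ge0 // (_ : 4 * s = 2 * (2 * s)); last by ring.
  by rewrite expRM_natl lerXn2r ?nnegrE ?expR_ge0.
rewrite -!expRD ler_expR -subr_ge0.
have -> : 81 / (16 * c) + - (s / 2) - (4 * s + - (c * s ^+ 2)) =
    (4 * c * s - 9) ^+ 2 / (16 * c) by field; lra.
by rewrite divr_ge0 ?sqr_ge0 //; lra.
Qed.

Lemma geometric_tail_le (R : realType) (x q : R) (m : nat) : 0 < q < 1 -> 0 <= x <= q ->
  x ^+ m.+2 + m.+2%:R ^+ 2 * q ^+ m <=
    2 * expR (81 / (16 * - ln q)) / q * expR (- (Num.sqrt m.+1%:R / 2)).
Proof.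
move=> q01 /andP[x0 xq]; have [q0 q1] := andP q01.
set B := m.+2%:R ^+ 2 * q ^+ m.
have xB : x ^+ m.+2 <= B.
  have xq2 : x ^+ m.+2 <= q ^+ m.+2 by rewrite ler_pXn2r // ?nnegrE // ltW.
  apply: le_trans xq2 _.
  apply: le_trans (ler_wiXn2l (ltW q0) (ltW q1) (leqnSn m.+1)) _.
  apply: le_trans (ler_wiXn2l (ltW q0) (ltW q1) (leqnSn m)) _.
  by rewrite ler_peMl ?exprn_ge0 ?(ltW q0) ?exprn_ege1 ?ler1n.
have BE : B = m.+2%:R ^+ 2 * q ^+ m.+1 / q.
  by rewrite /B (exprS q) mulrCA [RHS]mulrC mulKf // gt_eqF.
have := sqr_mul_geometric_le m.+1 q01.
have qV_gt0 : 0 < q^-1 by rewrite invr_gt0.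
rewrite -(ler_pM2r qV_gt0) -BE => BK.
have -> : 2 * expR (81 / (16 * - ln q)) / q * expR (- (Num.sqrt m.+1%:R / 2)) =
  2 * (expR (81 / (16 * - ln q)) * expR (- (Num.sqrt m.+1%:R / 2)) / q) by ring.
lra.
Qed.

Theorem corollary6p2 (R : realType) (p : R) (hp0 : 0 < p) (hp1 : p < 1) :
  exists C : R, 0 < C /\
    forall (P : R), p <= P -> P < 1 ->
    forall (n : nat) (ps : {set 'I_n.+1} -> R),
      (forall s : {set 'I_n.+1}, face s -> p <= ps s <= P) ->
      1 - C * expR (- (Num.sqrt (n%:R : R) / 2))
        <= lower_prob ps (fun X => complex_connected (lower_complex X)).
Proof.
set q := 1 - p ^+ 3; set K := expR (81 / (16 * - ln q)).
have q01 : 0 < q < 1 by rewrite subr_gt0 exprn_ilt1 ?ltW // ltrBlDr ltrDl exprn_gt0.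
have [q_gt0 q_lt1] := andP q01.
have K_ge1 : 1 <= K.
  apply: le_trans (expR_ge1Dx _); rewrite lerDl divr_ge0 // mulr_ge0 // oppr_ge0.
  by rewrite ltW // ln_lt0.
have C_ge1 : 1 <= 2 * K / q.
  by rewrite ler_pdivlMr // mul1r; apply: le_trans (ltW q_lt1) _; lra.
exists (2 * K / q); split; first by apply: lt_le_trans C_ge1.
move=> P pP P1 n ps ps_bounds.
have [p0 p1] : 0 <= p /\ p <= 1 by split; apply: ltW.
have ps01 s : face s -> p <= ps s <= 1.
  by move=> fs; case/andP: (ps_bounds s fs) => -> /le_trans; apply; apply: ltW.
rewrite lower_probE prob_complement -lower_probE lerD2l lerN2.
case: n ps ps_bounds ps01 => [|m] ps _ ps01.
  rewrite sqrtr0 mul0r oppr0 expR0 mulr1; apply: le_trans C_ge1.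
  by rewrite lower_probE prob_le1 // => s; apply: face_weight01 p0 ps01 s.
apply: le_trans (prob_disconnected_le p0 p1 ps01 _) _ => //.
apply: geometric_tail_le => //; rewrite subr_ge0 p1 lerD2l lerN2.
by rewrite -[leRHS]expr1 ler_wiXn2l.
Qed.
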